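(* Consider the thresholding bandit setting and algorithm LSA with parameter $\alpha$ in the context, with $0<\alpha\le 8$ and $T\ge\max\{40/\alpha+1,40\}K$. Let $f(x)=\alpha x+\ln\alpha+0.5-\alpha$. For every arm $i\in B$ and every $\varkappa\ge\frac{\alpha-\ln\alpha-0.5}{\alpha}$, on the event $\mathcal{M}_{i,\varkappa}\cap\mathcal{F}_{\Lambda-f(\varkappa)}$ we have $T_i(T)\ge\lambda_i/20$.
   Context: $K\ge2$ arms; arm $i$ has reward distribution $\mathcal{D}_i$ on $[0,1]$ with mean $\theta_i$; $\theta\in(0,1)$; $\Delta_i=|\theta_i-\theta|$ (convention $\ln(1/0)=+\infty$). For each $i$, rewards $X_{i,1},X_{i,2},\dots$ from successive pulls of arm $i$ are i.i.d. from $\mathcal{D}_i$, independent across arms; $\hat\Delta_{i,t}=|\frac1t\sum_{s\le t}X_{i,s}-\theta|$. $T_i(t)$ = number of pulls of arm $i$ in the first $t$ rounds; $\hat\Delta_i(t)=\hat\Delta_{i,T_i(t)}$. LSA (parameter $\alpha>0$, budget $T$): pull each arm once in rounds $1..K$; in round $t=K+1,\dots,T$ pull an arm minimizing $\alpha T_i(t-1)(\hat\Delta_i(t-1))^2+0.5\ln T_i(t-1)$. $\xi_i(t)=\alpha T_i(t)(\hat\Delta_i(t))^2+0.5\ln T_i(t)$ for $t\ge K$; $\mathcal{F}_C=\{\exists T',K\le T'\le T:\xi_i(T')>C\ \forall i\}$. $M=\max\{40/\alpha+1,40\}$; $g_i(x)=e^{2x}$ if $x\le\ln\Delta_i^{-1}$,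 $g_i(x)=\frac{x-\ln\Delta_i^{-1}+\alpha}{\alpha\Delta_i^2}$ otherwise; $\Lambda$ is the unique $x\ge0$ with $\sum_ig_i(x)=T/M$; $\lambda_i=g_i(\Lambda)$; $B=\{i:\ln\Delta_i^{-1}<\Lambda\}$. $\mathcal{M}_{i,\varkappa}$ is the event that for all integers $1\le t\le\lambda_i$, $|\hat\Delta_{i,t}-\Delta_i|\le\sqrt{(\lambda_i\Delta_i^2/5-\varkappa/2+\frac1{4\alpha}\ln\frac{\lambda_i}{t})/t}$. *)

From HB Require Import structures.
From mathcomp Require Import all_boot all_order all_algebra.
From mathcomp Require Import reals sequences exp.
Set Implicit Arguments. Unset Strict Implicit. Unset Printing Implicit Defensive.
Import Order.TTheory GRing.Theory Num.Theory.
Local Open Scope ring_scope.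

Section TB.
Variables (R : realType) (K : nat).

(* T_i(t): number of pulls of arm i in rounds 1..t, given the arm a s pulled in round s *)
Definition Tcnt (a : nat -> 'I_K) (i : 'I_K) (t : nat) : nat :=
  (\sum_(1 <= s < t.+1) (a s == i))%N.

(* hat Delta_{i,n} = | (1/n) sum_{s<=n} X_{i,s} - theta |, rewards of arm i
   indexed from 0: X i 0, X i 1, ... are the rewards of its 1st, 2nd, ... pull *)
Definition emp_gap (X : nat -> R) (theta : R) (n : nat) : R :=
  `| (\sum_(s < n) X s) / n%:R - theta |.

Definition xi (alpha theta : R) (X : 'I_K -> nat -> R) (a : nat -> 'I_K)
  (i : 'I_K) (t : nat) : R :=
  let n := Tcnt a i t in
  alpha * n%:R * (emp_gap (X i) theta n) ^+ 2 + 2^-1 * ln (n%:R).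

(* a is a run of LSA (any tie-breaking) with budget T on reward stacks X *)
Definition is_LSA (alpha theta : R) (T : nat) (X : 'I_K -> nat -> R)
  (a : nat -> 'I_K) : Prop :=
  (forall i, Tcnt a i K = 1%N) /\
  (forall t : nat, (K < t <= T)%N ->
     forall j : 'I_K, xi alpha theta X a (a t) t.-1 <= xi alpha theta X a j t.-1).

Definition gap (thetas : 'I_K -> R) (theta : R) (i : 'I_K) : R := `| thetas i - theta |.

(* g_i(x), with the convention ln(1/0) = +oo *)
Definition gfun (alpha D x : R) : R :=
  if (D == 0) || (x <= ln (D^-1)) then expR (2 * x)
  else (x - ln (D^-1) + alpha) / (alpha * D ^+ 2).

Definition Mconst (alpha : R) : R := Num.max (40 / alpha + 1) 40.

Definition fkappa (alpha x : R) : R := alpha * x + ln alpha + 2^-1 - alpha.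

(* event M_{i,kappa}; the square root must be real (radicand >= 0) *)
Definition eventM (alpha theta : R) (X : 'I_K -> nat -> R) (i : 'I_K)
  (D lam kappa : R) : Prop :=
  forall t : nat, (1 <= t)%N -> t%:R <= lam ->
    let r := (lam * D ^+ 2 / 5 - kappa / 2 + (4 * alpha)^-1 * ln (lam / t%:R)) / t%:R in
    0 <= r /\ `| emp_gap (X i) theta t - D | <= Num.sqrt r.

Definition eventF (alpha theta : R) (T : nat) (X : 'I_K -> nat -> R)
  (a : nat -> 'I_K) (C : R) : Prop :=
  exists T' : nat, (K <= T' <= T)%N /\ forall j : 'I_K, C < xi alpha theta X a j T'.

End TB.

From HB Require Import structures.
From mathcomp Require Import all_boot all_order all_algebra.
From mathcomp Require Import reals sequences exp.
From mathcomp Require Import ring lra.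
Set Implicit Arguments. Unset Strict Implicit. Unset Printing Implicit Defensive.
Import Order.TTheory GRing.Theory Num.Theory.
Local Open Scope ring_scope.

(* Suppose T_i(T) < lambda_i / 20 and let T' be the time given by F, so that
   t = T_i(T') < lambda_i / 20.  Put A = alpha lambda_i Delta_i^2, which equals
   Lambda - ln (1/Delta_i) + alpha for i in B, and w = alpha kappa.  On M at t,
   (hat Delta)^2 <= 4 Delta_i^2 + 4/3 r_t, which bounds xi_i(T') by
   7A/15 - 2w/3 + ln(lambda_i)/2 - ln(20)/6.  At t = floor(lambda_i) the
   radicand r_t of M must be nonnegative, which forces w <= 2A/5 + 1/40.  With
   the tangent bound ln A <= ln(5/2) + 2A/5 - 1 and 6 ln(5/2) - ln 20 <= 59/20
   this gives xi_i(T') <= Lambda - f(kappa), contradicting F. *)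

Lemma Tcnt_homo (K : nat) (a : nat -> 'I_K) (i : 'I_K) :
  {homo Tcnt a i : m n / (m <= n)%N}.
Proof.
by move=> m n mn; rewrite /Tcnt [leqRHS](@big_cat_nat _ _ _ m.+1) ?leq_addr.
Qed.

Lemma ln_le_subr1 (R : realType) (x : R) : 0 < x -> ln x <= x - 1.
Proof.
by move=> x_gt0; have := @le_ln1Dx R (x - 1); rewrite addrCA subrr addr0; apply; lra.
Qed.

Lemma six_ln_5half_sub_ln20_le (R : realType) : 6 * ln (5/2 : R) - ln 20 <= 59/20.
Proof.
have -> : 6 * ln (5/2 : R) - ln 20 = ln ((5/2) ^+ 6 / 20).
  by rewrite [RHS]ln_div ?posrE ?exprn_gt0 ?lnXn //; lra.
rewrite -[X in _ <= X](expRK (59/20 : R)) ler_ln ?posrE ?expR_gt0 ?divr_gt0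
  ?exprn_gt0 //; last by lra.
have -> : (59/20 : R) = 10%:R * (59/200) by lra.
rewrite expRM_natl; apply: (@le_trans _ _ ((259/200) ^+ 10)).
  by rewrite !exprS expr0; lra.
apply: lerXn2r; rewrite ?nnegrE ?expR_ge0 //; first lra.
by have := expR_ge1Dx (59/200 : R); lra.
Qed.

Lemma ln_le_tangent (R : realType) (c x : R) :
  0 < c -> 0 < x -> ln x <= ln c + x / c - 1.
Proof.
move=> c_gt0 x_gt0; have := ln_le_subr1 (divr_gt0 x_gt0 c_gt0).
by rewrite ln_div ?posrE //; lra.
Qed.

Lemma sqr_le_of_dist_le_sqrt (R : rcfType) (e D r : R) :
  0 <= D -> 0 <= r -> `|e - D| <= Num.sqrt r -> e ^+ 2 <= 4 * D ^+ 2 + 4/3 * r.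
Proof.
move=> D_ge0 r_ge0; rewrite ler_distlC => /andP[e_lo e_hi].
move: (sqrtr_ge0 r) (sqr_sqrtr r_ge0) e_lo e_hi.
move: (Num.sqrt r) => y y_ge0 <- e_lo e_hi.
have : 0 <= (D + y - e) * (D + y + e) by apply: mulr_ge0; lra.
have : 0 <= (3 * D - y) ^+ 2 by rewrite sqr_ge0.
rewrite !expr2; lra.
Qed.

Section IndexBound.
Variables (R : realType) (alpha D lam kappa : R).
Hypotheses (alpha_gt0 : 0 < alpha) (D_gt0 : 0 < D).

Definition radicand (t : R) : R :=
  (lam * D ^+ 2 / 5 - kappa / 2 + (4 * alpha)^-1 * ln (lam / t)) / t.

Lemma mul_radicand (t : R) : 0 < t ->
  alpha * t * radicand t =
  alpha * lam * D ^+ 2 / 5 - alpha * kappa / 2 + ln (lam / t) / 4.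
Proof. by move=> t_gt0; rewrite /radicand; field; rewrite !gt_eqF. Qed.

Lemma index_le_of_radicand (t e : R) : 1 <= t -> 20 * t <= lam ->
  0 <= radicand t -> `|e - D| <= Num.sqrt (radicand t) ->
  alpha * t * e ^+ 2 + 2^-1 * ln t <=
  7/15 * (alpha * lam * D ^+ 2) - 2/3 * (alpha * kappa) + 2^-1 * ln lam - 6^-1 * ln 20.
Proof.
move=> t_ge1 t_small r_ge0 e_near.
have t_gt0 : 0 < t by lra.
have scaled_e2_le :
    alpha * t * e ^+ 2 <= alpha * t * (4 * D ^+ 2 + 4/3 * radicand t).
  rewrite ler_pM2l ?mulr_gt0 //.
  exact: sqr_le_of_dist_le_sqrt (ltW D_gt0) r_ge0 e_near.
have scaled_t_le : alpha * D ^+ 2 * (20 * t) <= alpha * D ^+ 2 * lam.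
  by rewrite ler_pM2l ?mulr_gt0 ?exprn_gt0.
have ln_t_le : ln 20 + ln t <= ln lam.
  by rewrite -lnM ?posrE ?ler_ln ?posrE ?mulr_gt0 //; lra.
have := mul_radicand t_gt0; rewrite ln_div ?posrE; lra.
Qed.

Lemma kappa_le_of_radicand (s : R) : 0 < s -> 0 < lam -> lam <= 21/20 * s ->
  0 <= radicand s -> alpha * kappa <= 2/5 * (alpha * lam * D ^+ 2) + 1/40.
Proof.
move=> s_gt0 lam_gt0 lam_le r_ge0.
have : 0 <= alpha * s * radicand s by rewrite mulr_ge0 // mulr_ge0 // ltW.
have : lam / s <= 21/20 by rewrite ler_pdivrMr //; lra.
have := ln_le_subr1 (divr_gt0 lam_gt0 s_gt0).
rewrite mul_radicand //; lra.
Qed.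

Lemma index_le_Lambda_sub_fkappa (Lambda t s e : R) :
  ln D^-1 < Lambda -> alpha * lam * D ^+ 2 = Lambda - ln D^-1 + alpha ->
  1 <= t -> 20 * t <= lam -> 0 <= radicand t -> `|e - D| <= Num.sqrt (radicand t) ->
  0 < s -> lam <= 21/20 * s -> 0 <= radicand s ->
  alpha * t * e ^+ 2 + 2^-1 * ln t <= Lambda - fkappa alpha kappa.
Proof.
move=> lnD_lt lamE t_ge1 t_small rt_ge0 e_near s_gt0 lam_le rs_ge0.
have lam_gt0 : 0 < lam by lra.
have alpha_lt : alpha < alpha * lam * D ^+ 2.
  by rewrite lamE -subr_gt0 addrK subr_gt0.
have A_gt0 := lt_trans alpha_gt0 alpha_lt.
have lnA : ln (alpha * lam * D ^+ 2) = ln alpha + ln lam + 2 * ln D.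
  by rewrite !lnM ?posrE ?mulr_gt0 //; lra.
have ln_alpha_le : ln alpha <= ln (alpha * lam * D ^+ 2).
  by rewrite ler_ln ?posrE ?ltW.
have ln_A_le :
    ln (alpha * lam * D ^+ 2) <= ln (5/2) + alpha * lam * D ^+ 2 / (5/2) - 1.
  by apply: ln_le_tangent A_gt0; lra.
have := six_ln_5half_sub_ln20_le R.
have := index_le_of_radicand t_ge1 t_small rt_ge0 e_near.
have := kappa_le_of_radicand s_gt0 lam_gt0 lam_le rs_ge0.
by move: lamE; rewrite /fkappa lnV ?posrE //; lra.
Qed.

End IndexBound.

Lemma mul_gfun_sqr (R : realType) (alpha D x : R) : 0 < alpha -> 0 < D ->
  ln D^-1 < x -> alpha * gfun alpha D x * D ^+ 2 = x - ln D^-1 + alpha.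
Proof.
move=> alpha_gt0 D_gt0 lnD_lt.
by rewrite /gfun gt_eqF //= leNgt lnD_lt /=; field; rewrite !gt_eqF.
Qed.

Lemma truncn_ge20_bounds (R : realType) (x : R) : 20 <= x ->
  [/\ (1 <= Num.truncn x)%N, (Num.truncn x)%:R <= x
    & x <= 21/20 * (Num.truncn x)%:R].
Proof.
move=> x_ge20; have x_ge0 : 0 <= x by lra.
have /andP[s_le x_lt] := truncn_itv x_ge0.
have s_ge20 : 20 <= (Num.truncn x)%:R :> R by rewrite (ler_nat R 20) truncn_ge_nat.
split=> //; first by rewrite -(ler_nat R); lra.
by rewrite -natr1 in x_lt; lra.
Qed.

Theorem lemma10 (R : realType) (K T : nat) (alpha theta : R)
  (thetas : 'I_K -> R) (X : 'I_K -> nat -> R) (a : nat -> 'I_K)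
  (Lambda kappa : R) (i : 'I_K) :
  (2 <= K)%N ->
  0 < theta < 1 ->
  (forall j, 0 <= thetas j <= 1) ->
  (forall j s, 0 <= X j s <= 1) ->
  0 < alpha <= 8 ->
  Mconst alpha * K%:R <= T%:R ->
  is_LSA alpha theta T X a ->
  0 <= Lambda ->
  \sum_(j < K) gfun alpha (gap thetas theta j) Lambda = T%:R / Mconst alpha ->
  (* i \in B *)
  0 < gap thetas theta i -> ln ((gap thetas theta i)^-1) < Lambda ->
  (alpha - ln alpha - 2^-1) / alpha <= kappa ->
  eventM alpha theta X i (gap thetas theta i)
    (gfun alpha (gap thetas theta i) Lambda) kappa ->
  eventF alpha theta T X a (Lambda - fkappa alpha kappa) ->
  gfun alpha (gap thetas theta i) Lambda / 20 <= (Tcnt a i T)%:R.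
Proof.
move=> _ _ _ _ /andP[alpha_gt0 _] _ [Tcnt_K _] _ _ D_gt0 lnD_lt _ hM.
move=> [T' [/andP[KT' T'T] xi_gt]].
set D := gap thetas theta i in D_gt0 lnD_lt hM *.
set lam := gfun alpha D Lambda in hM *.
have lamE : alpha * lam * D ^+ 2 = Lambda - ln D^-1 + alpha :=
  mul_gfun_sqr alpha_gt0 D_gt0 lnD_lt.
rewrite leNgt; apply/negP => Ti_small.
set t := Tcnt a i T'.
have t_ge1 : (1 <= t)%N by rewrite -(Tcnt_K i) Tcnt_homo.
have t_ge1R : 1 <= t%:R :> R by rewrite ler1n.
have t_small : 20 * t%:R <= lam.
  have : t%:R <= (Tcnt a i T)%:R :> R by rewrite ler_nat Tcnt_homo.
  lra.
have [rt_ge0 e_near] : 0 <= radicand alpha D lam kappa t%:R /\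
    `|emp_gap (X i) theta t - D| <= Num.sqrt (radicand alpha D lam kappa t%:R).
  by apply: hM => //; lra.
have lam_ge20 : 20 <= lam by lra.
have [s_ge1 s_le lam_le] := truncn_ge20_bounds lam_ge20.
have s_gt0 : 0 < (Num.truncn lam)%:R :> R by rewrite ltr0n.
have [rs_ge0 _] := hM _ s_ge1 s_le.
have := index_le_Lambda_sub_fkappa alpha_gt0 D_gt0 lnD_lt lamE t_ge1R t_small
  rt_ge0 e_near s_gt0 lam_le rs_ge0.
have := xi_gt i; rewrite /xi -/t /=; lra.
Qed.
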